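(* Let $\alpha\in(0,1]$. For every $j\ge0$, $n\ge1$, every complex number $z$ and every function $g:\mathcal X_j\to\mathbb C$ with $\|g\|_{\alpha,\xi_j}\le1$, $$\|L_{j,z}^ng-L_j^ng\|_{\alpha,\xi_{j+n}}\le |z|e^{|\mathrm{Re}(z)|\|S_{j,n}f\|_\infty}\|L_j^n\mathbf 1\|_\infty\Big((1+\Gamma_{j,n}^\alpha+2Q_{j,n}(\phi))\|S_{j,n}f\|_\infty+Q_{j,n}(f)\Big)=:R_{j,n}(z).$$ Consequently, $$\|L_{j,z}^n-L_j^n\|_\alpha\le 3\xi_{j+n}^{-1}R_{j,n}(z),$$ where $\|\cdot\|_\alpha$ here denotes the operator norm with respect to the $\alpha$-Hölder norms $\|\cdot\|_\alpha$ on $\mathcal X_j$ and $\mathcal X_{j+n}$.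
   Context: $(\mathcal X_j,\rho_j)_{j\ge0}$ are metric spaces with $\mathrm{diam}(\mathcal X_j)\le1$ and $T_j:\mathcal X_j\to\mathcal X_{j+1}$ are maps. There are sequences $\gamma_j\ge1$ and $\xi_j\in(0,1]$ such that for all $j$ and all $x,x'\in\mathcal X_{j+1}$ with $\rho_{j+1}(x,x')\le\xi_{j+1}$ one can write $T_j^{-1}\{x\}=\{y_{j,1},\dots,y_{j,d_j}\}$, $T_j^{-1}\{x'\}=\{y'_{j,1},\dots,y'_{j,d_j}\}$ (with $d_j=d_j(x)$) so that $\rho_j(y_{j,k},y'_{j,k})\le\min(\gamma_j^{-1}\rho_{j+1}(x,x'),\xi_j)$ for every $k$. $T_j^n=T_{j+n-1}\circ\cdots\circ T_j$. For $0<r\le1$ and $g$ on $\mathcal X_j$: $v_{\alpha,r}(g)=\sup\{|g(x)-g(x')|/\rho_j(x,x')^\alpha: 0<\rho_j(x,x')\le r\}$, $\|g\|_{\alpha,r}=\|g\|_\infty+v_{\alpha,r}(g)$, $v_\alpha=v_{\alpha,1}$, $\|g\|_\alpha=\|g\|_{\alpha,1}$. $\phi_j,f_j:\mathcal X_j\to\mathbb R$ are functions with $\|\phi_j\|_\alpha<\infty$ (and $f_j$ Hölder). For $z\in\mathbb C$, $L_{j,z}g(x)=\sum_{y:T_jy=x}e^{\phi_j(y)+zf_j(y)}g(y)$, $L_{j,z}^n=L_{j+n-1,z}\circ\cdots\circ L_{j,z}$, $L_j=L_{j,0}$, $L_j^n=L_{j,0}^n$, $\mathbf 1$ the constant function $1$.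 $S_{j,n}f=\sum_{k=0}^{n-1}f_{j+k}\circ T_j^k$, $\Gamma_{j,n}=\prod_{s=j}^{j+n-1}\gamma_s^{-1}$, and for a sequence of functions $h=(h_j)$, $Q_{j,n}(h)=\sum_{k=0}^{n-1}v_{\alpha,\xi_{j+k}}(h_{j+k})\,(\Gamma_{j+k,n-k})^\alpha$. *)

From Stdlib Require Import Reals List Permutation.
From Coquelicot Require Import Coquelicot.
Open Scope R_scope.

Definition cexp (w : C) : C := (exp (Re w) * cos (Im w), exp (Re w) * sin (Im w)).

(* supremum of a set of nonnegative (extended) reals; sup of the empty set is 0 *)
Definition Rbar_sup (P : Rbar -> Prop) : Rbar := Rbar_lub (fun t => t = Finite 0 \/ P t).

Definition supnorm {A : Type} (g : A -> C) : Rbar :=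
  Rbar_sup (fun t => exists x, t = Finite (Cmod (g x))).

Definition holder_var {A : Type} (rho : A -> A -> R) (alpha r : R) (g : A -> C) : Rbar :=
  Rbar_sup (fun t => exists x x', 0 < rho x x' /\ rho x x' <= r /\
       t = Finite (Cmod (Cminus (g x) (g x')) / Rpower (rho x x') alpha)).

Definition holder_norm {A : Type} (rho : A -> A -> R) (alpha r : R) (g : A -> C) : Rbar :=
  Rbar_plus (supnorm g) (holder_var rho alpha r g).

Definition metric_diam1 {A : Type} (rho : A -> A -> R) : Prop :=
  (forall x y, 0 <= rho x y) /\
  (forall x y, rho x y = 0 <-> x = y) /\
  (forall x y, rho x y = rho y x) /\
  (forall x y w, rho x w <= rho x y + rho y w) /\
  (forall x y, rho x y <= 1).

Fixpoint Titer (X : nat -> Type) (T : forall j, X j -> X (S j)) (j k : nat) : X j -> X (k + j)%nat :=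
  match k as k0 return X j -> X (k0 + j)%nat with
  | O => fun x => x
  | S m => fun x => T (m + j)%nat (Titer X T j m x)
  end.

(* transfer operator L_{j,z}; pre j x enumerates T_j^{-1}{x} *)
Definition Lop (X : nat -> Type) (pre : forall j, X (S j) -> list (X j))
  (phi f : forall j, X j -> R) (j : nat) (z : C) (g : X j -> C) : X (S j) -> C :=
  fun x => fold_right Cplus (RtoC 0)
    (map (fun y => Cmult (cexp (Cplus (RtoC (phi j y)) (Cmult z (RtoC (f j y))))) (g y)) (pre j x)).

Fixpoint Lit (X : nat -> Type) (pre : forall j, X (S j) -> list (X j))
  (phi f : forall j, X j -> R) (z : C) (j n : nat) : (X j -> C) -> X (n + j)%nat -> C :=
  match n as n0 return (X j -> C) -> X (n0 + j)%nat -> C with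
  | O => fun g => g
  | S m => fun g => Lop X pre phi f (m + j)%nat z (Lit X pre phi f z j m g)
  end.

Fixpoint Ssum (X : nat -> Type) (T : forall j, X j -> X (S j)) (f : forall j, X j -> R)
  (j n : nat) : X j -> R :=
  match n with
  | O => fun _ => 0
  | S m => fun x => Ssum X T f j m x + f (m + j)%nat (Titer X T j m x)
  end.

Fixpoint Gamma (gamma : nat -> R) (j n : nat) : R :=
  match n with
  | O => 1
  | S m => Gamma gamma j m * / gamma (j + m)%nat
  end.

Definition Qsum (X : nat -> Type) (rho : forall j, X j -> X j -> R) (gamma xi : nat -> R)
  (alpha : R) (h : forall j, X j -> R) (j n : nat) : Rbar :=
  fold_right Rbar_plus (Finite 0)
    (map (fun k => Rbar_mult (holder_var (rho (j + k)%nat) alpha (xi (j + k)%nat)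
                                 (fun x => RtoC (h (j + k)%nat x)))
                             (Finite (Rpower (Gamma gamma (j + k)%nat (n - k)%nat) alpha)))
         (seq 0 n)).

(* operator norm w.r.t. the alpha-Hölder norms ||.||_alpha = ||.||_{alpha,1} *)
Definition opnorm {A B : Type} (rhoA : A -> A -> R) (rhoB : B -> B -> R) (alpha : R)
  (Op : (A -> C) -> B -> C) : Rbar :=
  Rbar_sup (fun t => exists g : A -> C, Rbar_le (holder_norm rhoA alpha 1 g) (Finite 1) /\
                      t = holder_norm rhoB alpha 1 (Op g)).

(** Writing [L^n_{j,z} g x] as the sum, over the [n]-th preimages [y] of [x], of
    [exp (S_n phi y + z S_n f y) g y], the difference [L^n_{j,z} g - L^n_j g] is the sum of
    [exp (S_n phi y) (exp (z S_n f y) - 1) g y]. As [|e^w - 1| <= |w| e^(max 0 (Re w))], every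
    summand is at most [|z| e^(|Re z| |S_n f|) |S_n f| exp (S_n phi y)], and these weights add
    up to [L^n_j 1 x]. For two points at distance [r <= xi], the pairing hypothesis matches their
    preimage trees branch by branch, and paired orbits are [Gamma_{j+k,n-k} r]-close at time [k].
    Along paired preimages [S_n phi], [S_n f] and [g] therefore vary by at most [Q(phi) r^alpha],
    [Q(f) r^alpha] and [Gamma^alpha r^alpha]; splitting the difference of paired summands into
    these three variations gives the Hölder part of [R_{j,n}(z)]. The operator-norm bound follows
    from [||h||_alpha <= (3 / xi) ||h||_{alpha,xi}], since points farther apart than [xi] are
    controlled by the sup norm. *)

From Stdlib Require Import Reals List Permutation Lia Lra.
From Coquelicot Require Import Coquelicot.
Open Scope R_scope.

(** * Exponential estimates *)

Lemma exp_le_exp (x y : R) : x <= y -> exp x <= exp y.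
Proof. intros [Hlt | ->]; [left; exact (exp_increasing _ _ Hlt) | right; reflexivity]. Qed.

Lemma Rpower_gt0 (x a : R) : 0 < Rpower x a.
Proof. apply exp_pos. Qed.

Lemma Rpower_ge_self (x a : R) : 0 < x <= 1 -> 0 <= a <= 1 -> x <= Rpower x a.
Proof.
  intros Hx Ha. rewrite <- (Rpower_1 x) at 1 by lra. unfold Rpower.
  apply exp_le_exp. assert (ln x <= 0) by (rewrite <- ln_1; apply ln_le; lra).
  nra.
Qed.

Lemma cexp_plus (p q : C) : cexp (p + q)%C = (cexp p * cexp q)%C.
Proof.
  unfold cexp; simpl. rewrite exp_plus, cos_plus, sin_plus.
  apply injective_projections; unfold Re, Im; simpl; ring.
Qed.

Lemma cexp_RtoC (a : R) : cexp (RtoC a) = RtoC (exp a).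
Proof.
  unfold cexp, Re, Im; simpl. rewrite cos_0, sin_0.
  apply injective_projections; simpl; ring.
Qed.

Lemma Cmod_cexp (p : C) : Cmod (cexp p) = exp (Re p).
Proof.
  unfold cexp, Cmod, Re, Im; cbn [fst snd].
  replace ((exp (fst p) * cos (snd p)) ^ 2 + (exp (fst p) * sin (snd p)) ^ 2)
    with (exp (fst p) ^ 2) by (pose proof (sin2_cos2 (snd p)); unfold Rsqr in *; nra).
  apply sqrt_pow2. left; apply exp_pos.
Qed.

Lemma Rabs_exp_sub1_le (u : R) : Rabs (exp u - 1) <= Rabs u * exp (Rmax 0 u).
Proof.
  pose proof (exp_pos u).
  destruct (Rle_lt_dec 0 u) as [Hu | Hu].
  - assert (1 <= exp u) by (rewrite <- exp_0; apply exp_le_exp; lra).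
    rewrite Rmax_right, !Rabs_right by lra.
    pose proof (exp_ineq1_le (- u)) as Hineq. rewrite exp_Ropp in Hineq.
    apply (Rmult_le_compat_l (exp u)) in Hineq; [|lra].
    rewrite Rinv_r in Hineq by lra. nra.
  - rewrite Rmax_left, exp_0 by lra.
    pose proof (exp_ineq1_le u).
    assert (exp u < 1) by (rewrite <- exp_0; apply exp_increasing; lra).
    rewrite !Rabs_left by lra. lra.
Qed.

Lemma Rabs_sin_le (x : R) : Rabs (sin x) <= Rabs x.
Proof.
  assert (Hpos : forall y, 0 < y -> Rabs (sin y) <= y).
  { intros y Hy. pose proof (sin_lt_x y Hy). pose proof (SIN_bound y).
    apply Rabs_le. split; [|lra].
    destruct (Rle_lt_dec y 1); [|lra].
    enough (0 <= sin y) by lra.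
    apply sin_ge_0; pose proof PI2_1; lra. }
  destruct (Rtotal_order x 0) as [Hx | [-> | Hx]].
  - rewrite <- (Ropp_involutive x), sin_neg, Rabs_Ropp, Rabs_Ropp, (Rabs_right (- x)) by lra.
    apply Hpos; lra.
  - rewrite sin_0; lra.
  - rewrite (Rabs_right x) by lra. auto.
Qed.

Lemma Cmod_cexp_sub1_le (w : C) : Cmod (cexp w - 1)%C <= Cmod w * exp (Rmax 0 (Re w)).
Proof.
  destruct w as [u v]. unfold Re; cbn [fst].
  set (E := exp (Rmax 0 u)).
  assert (HE : 0 < E) by apply exp_pos.
  assert (Hu : (exp u - 1) ^ 2 <= u ^ 2 * E ^ 2).
  { rewrite <- (pow2_abs (exp u - 1)), <- (pow2_abs u), <- Rpow_mult_distr.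
    pose proof (Rabs_exp_sub1_le u) as H; fold E in H. pose proof (Rabs_pos (exp u - 1)).
    apply pow_incr; lra. }
  assert (HuE : exp u <= E ^ 2).
  { unfold E. replace (exp (Rmax 0 u) ^ 2) with (exp (Rmax 0 u + Rmax 0 u))
      by (rewrite exp_plus; ring).
    apply exp_le_exp. unfold Rmax; destruct (Rle_dec 0 u); lra. }
  assert (Hv : 4 * sin (v / 2) ^ 2 <= v ^ 2).
  { replace (v ^ 2) with (4 * Rabs (v / 2) ^ 2) by (rewrite pow2_abs; field).
    rewrite <- (pow2_abs (sin (v / 2))).
    pose proof (Rabs_sin_le (v / 2)). pose proof (Rabs_pos (sin (v / 2))).
    apply Rmult_le_compat_l; [lra|]. apply pow_incr; lra. }
  assert (Hid : (exp u * cos v - 1) ^ 2 + (exp u * sin v) ^ 2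
                = (exp u - 1) ^ 2 + exp u * (4 * sin (v / 2) ^ 2)).
  { replace v with (2 * (v / 2)) at 1 2 by field.
    rewrite cos_2a_sin, sin_2a. pose proof (sin2_cos2 (v / 2)). unfold Rsqr in *. nra. }
  unfold Cmod, cexp, Re, Im; cbn [fst snd Cminus Cplus Copp RtoC].
  rewrite <- (sqrt_pow2 E) by lra.
  rewrite <- sqrt_mult_alt by (apply Rplus_le_le_0_compat; apply pow2_ge_0).
  apply sqrt_le_1_alt.
  replace ((exp u * cos v + - (1)) ^ 2 + (exp u * sin v + - 0) ^ 2)
    with ((exp u * cos v - 1) ^ 2 + (exp u * sin v) ^ 2) by ring.
  rewrite Hid.
  pose proof (exp_pos u). pose proof (pow2_ge_0 (sin (v / 2))).
  assert (exp u * (4 * sin (v / 2) ^ 2) <= E ^ 2 * v ^ 2) by (apply Rmult_le_compat; lra).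
  nra.
Qed.

Lemma Cmod_cexp_sub_le (b b' : C) :
  Cmod (cexp b - cexp b')%C <= Cmod (b - b')%C * exp (Rmax (Re b) (Re b')).
Proof.
  replace (cexp b - cexp b')%C with (cexp b' * (cexp (b - b') - 1))%C
    by (replace (cexp b) with (cexp (b' + (b - b'))%C) by (f_equal; ring);
        rewrite cexp_plus; ring).
  rewrite Cmod_mult, Cmod_cexp.
  replace (exp (Rmax (Re b) (Re b'))) with (exp (Re b') * exp (Rmax 0 (Re (b - b')%C))).
  - pose proof (Cmod_cexp_sub1_le (b - b')%C). pose proof (exp_pos (Re b')). nra.
  - rewrite <- exp_plus. f_equal. unfold Re, Cminus, Cplus, Copp; simpl.
    unfold Rmax; destruct (Rle_dec 0 _); destruct (Rle_dec (fst b) (fst b')); lra.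
Qed.

Lemma Rabs_exp_sub_le (a a' : R) : Rabs (exp a - exp a') <= Rabs (a - a') * (exp a + exp a').
Proof.
  pose proof (Cmod_cexp_sub_le (RtoC a) (RtoC a')) as H.
  rewrite !cexp_RtoC, <- !RtoC_minus, !Cmod_R in H. simpl in H.
  eapply Rle_trans; [exact H|]. apply Rmult_le_compat_l; [apply Rabs_pos|].
  pose proof (exp_pos a). pose proof (exp_pos a').
  unfold Rmax; destruct (Rle_dec a a'); lra.
Qed.

Lemma Rabs_plus_sub_le (a b a' b' : R) : Rabs (a + b - (a' + b')) <= Rabs (a - a') + Rabs (b - b').
Proof. replace (a + b - (a' + b')) with ((a - a') + (b - b')) by ring. apply Rabs_triang. Qed.

Lemma Forall2_choice {A B : Type} (Rel : A -> B -> Prop) (l : list A) :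
  (forall a, In a l -> exists b, Rel a b) -> exists bs, Forall2 Rel l bs.
Proof.
  induction l as [|a l IH]; intros H; [exists nil; constructor|].
  destruct (H a (or_introl eq_refl)) as [b Hb].
  destruct IH as [bs Hbs]; [intros a' Ha'; apply H; now right|].
  exists (b :: bs). now constructor.
Qed.

Lemma Forall2_Forall_r {A B : Type} (Rel : A -> B -> Prop) (Pb : B -> Prop) (l : list A) (bs : list B) :
  (forall a b, Rel a b -> Pb b) -> Forall2 Rel l bs -> List.Forall Pb bs.
Proof. intros H. induction 1; constructor; eauto. Qed.

Lemma zip_of_nth_error {A : Type} (P : A -> A -> Prop) (ys ys' : list A) :
  length ys = length ys' ->
  (forall k y y', nth_error ys k = Some y -> nth_error ys' k = Some y' -> P y y') ->
  exists ps, map fst ps = ys /\ map snd ps = ys' /\ List.Forall (fun p => P (fst p) (snd p)) ps.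
Proof.
  revert ys'. induction ys as [|a ys IH]; intros [|b ys'] Hl H; simpl in Hl; try discriminate.
  - now exists nil.
  - destruct (IH ys') as (ps & H1 & H2 & H3); [lia | intros k; apply (H (S k)) |].
    exists ((a, b) :: ps). simpl. rewrite H1, H2. repeat split; auto.
    constructor; auto. now apply (H 0%nat).
Qed.

Lemma concat_perm {A B P : Type} (sel : P -> B) (G : A -> list B) (l : list A) (bss : list (list P)) :
  Forall2 (fun w ps => Permutation (map sel ps) (G w)) l bss ->
  Permutation (map sel (concat bss)) (flat_map G l).
Proof. induction 1; simpl; [constructor|]. rewrite map_app. now apply Permutation_app. Qed.

Lemma flat_map_map {A A' B : Type} (h : A -> A') (G : A' -> list B) (l : list A) :
  flat_map (fun w => G (h w)) l = flat_map G (map h l).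
Proof. induction l as [|a l IH]; simpl; [|rewrite IH]; reflexivity. Qed.

Definition csum (l : list C) : C := fold_right Cplus (RtoC 0) l.
Definition rsum (l : list R) : R := fold_right Rplus 0 l.

Lemma csum_perm (l l' : list C) : Permutation l l' -> csum l = csum l'.
Proof. induction 1; unfold csum in *; simpl; try congruence; ring. Qed.

Lemma rsum_perm (l l' : list R) : Permutation l l' -> rsum l = rsum l'.
Proof. induction 1; unfold rsum in *; simpl; try congruence; ring. Qed.

Lemma csum_app (l l' : list C) : csum (l ++ l') = (csum l + csum l')%C.
Proof. induction l as [|a l IH]; unfold csum in *; simpl; [|rewrite IH]; ring. Qed.

Lemma rsum_app (l l' : list R) : rsum (l ++ l') = rsum l + rsum l'.
Proof. induction l as [|a l IH]; unfold rsum in *; simpl; [|rewrite IH]; ring. Qed.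

Lemma csum_RtoC {A : Type} (F : A -> R) (l : list A) :
  csum (map (fun y => RtoC (F y)) l) = RtoC (rsum (map F l)).
Proof. induction l as [|a l IH]; unfold csum, rsum in *; simpl; [|rewrite IH, RtoC_plus]; reflexivity. Qed.

Lemma csum_map_sub {A : Type} (F G : A -> C) (l : list A) :
  (csum (map F l) - csum (map G l))%C = csum (map (fun y => F y - G y)%C l).
Proof. induction l as [|a l IH]; unfold csum in *; simpl; [|rewrite <- IH]; ring. Qed.

Lemma csum_scale {A : Type} (c : C) (F : A -> C) (l : list A) :
  (c * csum (map F l))%C = csum (map (fun y => c * F y)%C l).
Proof. induction l as [|a l IH]; unfold csum in *; simpl; [|rewrite <- IH]; ring. Qed.

Lemma csum_flat_map {A B : Type} (F : B -> C) (G : A -> list B) (l : list A) :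
  csum (map F (flat_map G l)) = csum (map (fun w => csum (map F (G w))) l).
Proof.
  induction l as [|a l IH]; simpl; [reflexivity|].
  rewrite map_app, csum_app, IH. reflexivity.
Qed.

Lemma Cmod_csum_le (l : list C) : Cmod (csum l) <= rsum (map Cmod l).
Proof.
  induction l as [|a l IH]; unfold csum, rsum in *; simpl.
  - rewrite Cmod_0; lra.
  - eapply Rle_trans; [apply Cmod_triangle | lra].
Qed.

Lemma rsum_le {A : Type} (F G : A -> R) (l : list A) :
  (forall y, In y l -> F y <= G y) -> rsum (map F l) <= rsum (map G l).
Proof.
  induction l as [|a l IH]; intros H; unfold rsum in *; simpl; [lra|].
  apply Rplus_le_compat; [apply H; left | apply IH; intros; apply H; right]; auto.
Qed.

Lemma rsum_ge0 {A : Type} (F : A -> R) (l : list A) :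
  (forall y, In y l -> 0 <= F y) -> 0 <= rsum (map F l).
Proof.
  induction l as [|a l IH]; intros H; unfold rsum in *; simpl; [lra|].
  apply Rplus_le_le_0_compat; [apply H; left | apply IH; intros; apply H; right]; auto.
Qed.

Lemma rsum_scale {A : Type} (K : R) (u : A -> R) (l : list A) :
  rsum (map (fun p => K * u p) l) = K * rsum (map u l).
Proof. induction l as [|b l IH]; unfold rsum in *; simpl; [|rewrite IH]; ring. Qed.

Lemma rsum_lin {A : Type} (K1 K2 : R) (u v : A -> R) (l : list A) :
  rsum (map (fun p => K1 * u p + K2 * v p) l) = K1 * rsum (map u l) + K2 * rsum (map v l).
Proof. induction l as [|a l IH]; unfold rsum in *; simpl; [|rewrite IH]; ring. Qed.

Lemma rsum_seq_S (F : nat -> R) (m : nat) :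
  rsum (map F (seq 0 (S m))) = rsum (map F (seq 0 m)) + F m.
Proof. rewrite seq_S, map_app, rsum_app. unfold rsum; simpl. ring. Qed.

(** * Suprema and Hölder norms *)

Lemma Rbar_sup_le (P : Rbar -> Prop) (B : Rbar) :
  Rbar_le (Finite 0) B -> (forall t, P t -> Rbar_le t B) -> Rbar_le (Rbar_sup P) B.
Proof.
  intros H0 H. unfold Rbar_sup, Rbar_lub. destruct (Rbar_ex_lub _) as [l [Hub Hl]]; simpl.
  apply Hl. intros t [Ht | Ht]; [subst t; exact H0 | auto].
Qed.

Lemma Rbar_sup_ub (P : Rbar -> Prop) (t : Rbar) : P t -> Rbar_le t (Rbar_sup P).
Proof.
  intros H. unfold Rbar_sup, Rbar_lub. destruct (Rbar_ex_lub _) as [l [Hub Hl]]; simpl.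
  exact (Hub _ (or_intror H)).
Qed.

Lemma Rbar_sup_ge0 (P : Rbar -> Prop) : Rbar_le (Finite 0) (Rbar_sup P).
Proof.
  unfold Rbar_sup, Rbar_lub. destruct (Rbar_ex_lub _) as [l [Hub Hl]]; simpl.
  exact (Hub _ (or_introl eq_refl)).
Qed.

Lemma Rbar_sup_mono (P Q : Rbar -> Prop) :
  (forall t, P t -> Q t) -> Rbar_le (Rbar_sup P) (Rbar_sup Q).
Proof. intros H. apply Rbar_sup_le; [apply Rbar_sup_ge0 | intros t Ht; apply Rbar_sup_ub; auto]. Qed.

Lemma Rbar_bounded_finite (S : Rbar) (B : R) :
  Rbar_le (Finite 0) S -> Rbar_le S (Finite B) -> is_finite S.
Proof. destruct S; simpl; try tauto; reflexivity. Qed.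

Lemma Rbar_mult_pinfty_pos (a : R) : 0 < a -> Rbar_mult p_infty (Finite a) = p_infty.
Proof. intros Ha. apply is_Rbar_mult_unique, is_Rbar_mult_p_infty_pos. exact Ha. Qed.

Lemma Rbar_mult_pos_pinfty (a : R) : 0 < a -> Rbar_mult (Finite a) p_infty = p_infty.
Proof. intros Ha. rewrite Rbar_mult_comm. now apply Rbar_mult_pinfty_pos. Qed.

Lemma Rbar_le_pinfty (x : Rbar) : Rbar_le x p_infty.
Proof. destruct x; exact I. Qed.

Lemma Rbar_mult_ge0_pos_l (a : R) (H : Rbar) :
  0 < a -> Rbar_le (Finite 0) H -> Rbar_le (Finite 0) (Rbar_mult (Finite a) H).
Proof.
  intros Ha Hn. destruct H as [h | |]; simpl in Hn; try tauto.
  - simpl. apply Rmult_le_pos; lra.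
  - rewrite Rbar_mult_pos_pinfty by exact Ha. exact I.
Qed.

Lemma Rbar_mult_le_compat_pos_l (a : R) (H1 H2 : Rbar) :
  0 < a -> Rbar_le (Finite 0) H1 -> Rbar_le H1 H2 ->
  Rbar_le (Rbar_mult (Finite a) H1) (Rbar_mult (Finite a) H2).
Proof.
  intros Ha Hn Hle.
  destruct H1 as [h1 | |]; destruct H2 as [h2 | |]; simpl in Hn, Hle; try tauto;
    try (rewrite Rbar_mult_pos_pinfty by exact Ha; exact I).
  simpl. apply Rmult_le_compat_l; lra.
Qed.

Section HolderNorms.

Variables (A : Type) (rho : A -> A -> R) (alpha : R).

Lemma supnorm_ge0 (h : A -> C) : Rbar_le (Finite 0) (supnorm h).
Proof. apply Rbar_sup_ge0. Qed.

Lemma holder_var_ge0 (r : R) (h : A -> C) : Rbar_le (Finite 0) (holder_var rho alpha r h).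
Proof. apply Rbar_sup_ge0. Qed.

Lemma holder_norm_ge0 (r : R) (h : A -> C) : Rbar_le (Finite 0) (holder_norm rho alpha r h).
Proof.
  pose proof (supnorm_ge0 h). pose proof (holder_var_ge0 r h).
  unfold holder_norm. destruct (supnorm h), (holder_var rho alpha r h); simpl in *; tauto || lra.
Qed.

Lemma holder_norm_finite (r : R) (h : A -> C) :
  is_finite (holder_norm rho alpha r h) ->
  is_finite (supnorm h) /\ is_finite (holder_var rho alpha r h).
Proof.
  pose proof (supnorm_ge0 h). pose proof (holder_var_ge0 r h).
  unfold holder_norm, is_finite.
  destruct (supnorm h), (holder_var rho alpha r h); simpl in *; try tauto; discriminate.
Qed.

Lemma holder_var_mono (r r' : R) (h : A -> C) :
  r <= r' -> Rbar_le (holder_var rho alpha r h) (holder_var rho alpha r' h).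
Proof.
  intros H. apply Rbar_sup_mono. intros t (x & x' & H1 & H2 & H3).
  exists x, x'. repeat split; auto; lra.
Qed.

Lemma holder_norm_mono (r r' : R) (h : A -> C) :
  r <= r' -> Rbar_le (holder_norm rho alpha r h) (holder_norm rho alpha r' h).
Proof. intros H. apply Rbar_plus_le_compat; [apply Rbar_le_refl | now apply holder_var_mono]. Qed.

Lemma holder_var_finite (r : R) (h : A -> C) :
  r <= 1 -> is_finite (holder_norm rho alpha 1 h) -> is_finite (holder_var rho alpha r h).
Proof.
  intros Hr H. apply holder_norm_finite in H as [_ H].
  pose proof (holder_var_mono r 1 h Hr) as Hle. rewrite <- H in Hle.
  exact (Rbar_bounded_finite _ _ (holder_var_ge0 r h) Hle).
Qed.

Lemma Cmod_le_supnorm (h : A -> C) (x : A) :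
  is_finite (supnorm h) -> Cmod (h x) <= real (supnorm h).
Proof.
  intros Hf.
  assert (H : Rbar_le (Finite (Cmod (h x))) (supnorm h)) by (apply Rbar_sup_ub; now exists x).
  rewrite <- Hf in H. exact H.
Qed.

Hypothesis (Hrho : metric_diam1 rho) (Halpha : 0 <= alpha).

(* Stated at any scale [s >= rho x x'] so that the case [rho x x' = 0], where
   [Rpower 0 alpha = 1] is a junk value, needs no separate treatment later. *)
Lemma Cmod_sub_le_holder_var (r s : R) (h : A -> C) (x x' : A) :
  is_finite (holder_var rho alpha r h) -> 0 < s -> rho x x' <= s -> rho x x' <= r ->
  Cmod (h x - h x')%C <= real (holder_var rho alpha r h) * Rpower s alpha.
Proof.
  intros Hf Hs H1 H2.
  destruct Hrho as (Hpos & Hsep & _).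
  pose proof (holder_var_ge0 r h) as H0. rewrite <- Hf in H0. simpl in H0.
  destruct (Hpos x x') as [Hlt | Heq].
  - assert (H : Rbar_le (Finite (Cmod (h x - h x')%C / Rpower (rho x x') alpha))
                        (holder_var rho alpha r h)) by (apply Rbar_sup_ub; exists x, x'; auto).
    rewrite <- Hf in H. simpl in H.
    apply Rle_div_l in H; [|apply Rpower_gt0].
    eapply Rle_trans; [exact H|]. apply Rmult_le_compat_l; [exact H0|].
    apply Rle_Rpower_l; lra.
  - apply eq_sym, Hsep in Heq as ->.
    replace (h x' - h x')%C with (RtoC 0) by ring. rewrite Cmod_0.
    apply Rmult_le_pos; [exact H0 | left; apply Rpower_gt0].
Qed.

Lemma holder_unit_ball (r : R) (g : A -> C) :
  Rbar_le (holder_norm rho alpha r g) (Finite 1) ->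
  (forall x, Cmod (g x) <= 1) /\
  (forall x x' s, 0 < s -> rho x x' <= s -> rho x x' <= r -> Cmod (g x - g x')%C <= Rpower s alpha).
Proof.
  intros Hg.
  destruct (holder_norm_finite r g (Rbar_bounded_finite _ _ (holder_norm_ge0 r g) Hg)) as [Hs Hv].
  pose proof (supnorm_ge0 g) as Hs0. pose proof (holder_var_ge0 r g) as Hv0.
  unfold holder_norm in Hg. rewrite <- Hs, <- Hv in Hg. rewrite <- Hs in Hs0. rewrite <- Hv in Hv0.
  simpl in Hg, Hs0, Hv0. split.
  - intros x. pose proof (Cmod_le_supnorm g x Hs). lra.
  - intros x x' s Hs' H1 H2.
    eapply Rle_trans; [apply (Cmod_sub_le_holder_var r s); eauto|].
    pose proof (Rpower_gt0 s alpha). nra.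
Qed.

Lemma holder_norm_le_of_bounds (r S V : R) (D : A -> C) :
  0 <= S -> 0 <= V ->
  (forall x, Cmod (D x) <= S) ->
  (forall x x', 0 < rho x x' -> rho x x' <= r -> Cmod (D x - D x')%C <= V * Rpower (rho x x') alpha) ->
  Rbar_le (holder_norm rho alpha r D) (Finite (S + V)).
Proof.
  intros HS HV H1 H2. unfold holder_norm.
  change (Finite (S + V)) with (Rbar_plus (Finite S) (Finite V)).
  apply Rbar_plus_le_compat.
  - apply Rbar_sup_le; [exact HS|]. intros t [x ->]. apply H1.
  - apply Rbar_sup_le; [exact HV|]. intros t (x & x' & H3 & H4 & ->). simpl.
    apply Rle_div_l; [apply Rpower_gt0 | auto].
Qed.

(* [M] may be [p_infty]; then the case [c (K1 + K2) = 0] needs care, as Coquelicot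
   sets [0 * p_infty = 0]. *)
Lemma holder_norm_le_scaled_sup (r c K1 K2 : R) (L : A -> R) (M : Rbar) (D : A -> C) :
  0 <= c -> 0 <= K1 -> 0 <= K2 -> Rbar_le (Finite 0) M ->
  (forall x, Rbar_le (Finite (L x)) M) ->
  (forall x, Cmod (D x) <= c * K1 * L x) ->
  (forall x x', 0 < rho x x' -> rho x x' <= r ->
     Cmod (D x - D x')%C <= c * K2 * Rmax (L x) (L x') * Rpower (rho x x') alpha) ->
  Rbar_le (holder_norm rho alpha r D) (Rbar_mult (Finite c) (Rbar_mult M (Finite (K1 + K2)))).
Proof.
  intros Hc HK1 HK2 HM HLM H1 H2.
  destruct M as [m | |]; simpl in HM; try tauto.
  - simpl. replace (c * (m * (K1 + K2))) with (c * K1 * m + c * K2 * m) by ring.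
    apply holder_norm_le_of_bounds; try (apply Rmult_le_pos; [apply Rmult_le_pos|]; lra).
    + intros x. eapply Rle_trans; [apply H1|].
      apply Rmult_le_compat_l; [apply Rmult_le_pos; lra | apply HLM].
    + intros x x' Hx Hx'. eapply Rle_trans; [apply H2; auto|].
      apply Rmult_le_compat_r; [left; apply Rpower_gt0|].
      apply Rmult_le_compat_l; [apply Rmult_le_pos; lra|].
      pose proof (HLM x); pose proof (HLM x'); simpl in *. now apply Rmax_lub.
  - destruct (Req_dec (c * (K1 + K2)) 0) as [H0 | H0].
    + assert (HK : c * K1 = 0 /\ c * K2 = 0) by (split; nra).
      replace (Rbar_mult (Finite c) (Rbar_mult p_infty (Finite (K1 + K2)))) with (Finite (0 + 0)).
      * apply holder_norm_le_of_bounds; try lra.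
        -- intros x. specialize (H1 x). rewrite (proj1 HK), Rmult_0_l in H1. exact H1.
        -- intros x x' Hx Hx'. specialize (H2 x x' Hx Hx').
           rewrite (proj2 HK), Rmult_0_l, Rmult_0_l in H2. lra.
      * destruct (Rmult_integral _ _ H0) as [-> | HK0].
        -- rewrite Rbar_mult_0_l. f_equal; ring.
        -- rewrite HK0, Rbar_mult_0_r, Rbar_mult_0_r. f_equal; ring.
    + rewrite Rbar_mult_pinfty_pos, Rbar_mult_pos_pinfty by nra. apply Rbar_le_pinfty.
Qed.

Lemma holder_norm_le_scale (xi : R) (h : A -> C) :
  alpha <= 1 -> 0 < xi <= 1 ->
  Rbar_le (holder_norm rho alpha 1 h) (Rbar_mult (Finite (3 / xi)) (holder_norm rho alpha xi h)).
Proof.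
  intros Ha1 Hxi.
  pose proof (holder_norm_ge0 xi h) as Hn0.
  destruct (holder_norm rho alpha xi h) eqn:Hn; simpl in Hn0; try tauto.
  - destruct (holder_norm_finite xi h) as [Hs Hv]; [rewrite Hn; reflexivity|].
    pose proof (supnorm_ge0 h) as Hs0. rewrite <- Hs in Hs0. simpl in Hs0.
    pose proof (holder_var_ge0 xi h) as Hv0. rewrite <- Hv in Hv0. simpl in Hv0.
    assert (Hr : r = real (supnorm h) + real (holder_var rho alpha xi h))
      by (unfold holder_norm in Hn; rewrite <- Hs, <- Hv in Hn; now injection Hn).
    set (s := real (supnorm h)) in *. set (v := real (holder_var rho alpha xi h)) in *.
    assert (Hsx : 0 <= 2 * s / xi) by (apply Rdiv_le_0_compat; lra).
    eapply Rbar_le_trans; [apply (holder_norm_le_of_bounds 1 s (v + 2 * s / xi)); try lra|].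
    + intros x. now apply Cmod_le_supnorm.
    + intros x x' Hx Hx1. pose proof (Rpower_gt0 (rho x x') alpha).
      destruct (Rle_lt_dec (rho x x') xi) as [Hle | Hlt].
      * eapply Rle_trans; [apply (Cmod_sub_le_holder_var xi (rho x x')); auto; lra|]. fold v. nra.
      * (* far apart points: [|h x - h x'| <= 2 s = (2 s / xi) xi <= (2 s / xi) rho^alpha] *)
        assert (Hfar : Cmod (h x - h x')%C <= 2 * s).
        { unfold Cminus. eapply Rle_trans; [apply Cmod_triangle|]. rewrite Cmod_opp.
          pose proof (Cmod_le_supnorm h x Hs) as Hhx. pose proof (Cmod_le_supnorm h x' Hs) as Hhx'.
          fold s in Hhx. fold s in Hhx'. lra. }
        assert (xi <= Rpower (rho x x') alpha)
          by (eapply Rle_trans; [apply Rlt_le, Hlt | apply Rpower_ge_self; lra]).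
        assert (2 * s = 2 * s / xi * xi) by (field; lra).
        nra.
    + simpl. rewrite Hr.
      assert (s <= s / xi /\ v <= v / xi) as [] by (split; apply Rle_div_r; nra).
      replace (3 / xi * (s + v)) with (s / xi + 2 * s / xi + 3 * (v / xi)) by (field; lra).
      lra.
  - rewrite Rbar_mult_pos_pinfty by (apply Rdiv_lt_0_compat; lra). apply Rbar_le_pinfty.
Qed.

End HolderNorms.

(** * Perturbation of the weight by [z f] *)

Section PerturbationTerms.

Variables (Y : Type) (a s : Y -> R) (g : Y -> C) (z : C) (NS : R).

(* With [a = S_n phi] and [s = S_n f], the summand of [L^n_z g - L^n_0 g] at [y]. *)
Definition perturbation_term (y : Y) : C :=
  (RtoC (exp (a y)) * (cexp (z * RtoC (s y)) - 1) * g y)%C.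

Hypotheses (Hs : forall y, Rabs (s y) <= NS) (Hg : forall y, Cmod (g y) <= 1).

Lemma exp_Re_mul_le (y : Y) : exp (Re (z * RtoC (s y))%C) <= exp (Rabs (Re z) * NS).
Proof.
  apply exp_le_exp. unfold Re; simpl. rewrite Rmult_0_r, Rminus_0_r.
  eapply Rle_trans; [apply Rle_abs|]. rewrite Rabs_mult.
  apply Rmult_le_compat_l; [apply Rabs_pos | apply Hs].
Qed.

Lemma Cmod_cexp_mul_sub1_le (y : Y) :
  Cmod (cexp (z * RtoC (s y)) - 1)%C <= Cmod z * exp (Rabs (Re z) * NS) * NS.
Proof.
  eapply Rle_trans; [apply Cmod_cexp_sub1_le|].
  rewrite Cmod_mult, Cmod_R.
  assert (exp (Rmax 0 (Re (z * RtoC (s y))%C)) <= exp (Rabs (Re z) * NS)).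
  { unfold Rmax. destruct (Rle_dec _ _); [apply exp_Re_mul_le|].
    apply exp_le_exp. pose proof (Rabs_pos (s y)). pose proof (Hs y).
    apply Rmult_le_pos; [apply Rabs_pos | lra]. }
  pose proof (Cmod_ge_0 z). pose proof (Rabs_pos (s y)). pose proof (Hs y).
  pose proof (exp_pos (Rmax 0 (Re (z * RtoC (s y))%C))).
  replace (Cmod z * exp (Rabs (Re z) * NS) * NS) with (Cmod z * NS * exp (Rabs (Re z) * NS)) by ring.
  apply Rmult_le_compat; nra.
Qed.

Lemma Cmod_cexp_mul_sub_le (y y' : Y) :
  Cmod (cexp (z * RtoC (s y)) - cexp (z * RtoC (s y')))%C
  <= Cmod z * exp (Rabs (Re z) * NS) * Rabs (s y - s y').
Proof.
  eapply Rle_trans; [apply Cmod_cexp_sub_le|].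
  replace (z * RtoC (s y) - z * RtoC (s y'))%C with (z * RtoC (s y - s y'))%C
    by (rewrite RtoC_minus; ring).
  rewrite Cmod_mult, Cmod_R.
  assert (exp (Rmax (Re (z * RtoC (s y))%C) (Re (z * RtoC (s y'))%C)) <= exp (Rabs (Re z) * NS)).
  { unfold Rmax. destruct (Rle_dec _ _); apply exp_Re_mul_le. }
  pose proof (Cmod_ge_0 z). pose proof (Rabs_pos (s y - s y')).
  pose proof (exp_pos (Rmax (Re (z * RtoC (s y))%C) (Re (z * RtoC (s y'))%C))).
  replace (Cmod z * exp (Rabs (Re z) * NS) * Rabs (s y - s y'))
    with (Cmod z * Rabs (s y - s y') * exp (Rabs (Re z) * NS)) by ring.
  apply Rmult_le_compat; nra.
Qed.

Lemma Cmod_perturbation_term_le (y : Y) :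
  Cmod (perturbation_term y) <= Cmod z * exp (Rabs (Re z) * NS) * NS * exp (a y).
Proof.
  unfold perturbation_term. rewrite !Cmod_mult, Cmod_R, Rabs_right by (left; apply exp_pos).
  pose proof (Cmod_cexp_mul_sub1_le y). pose proof (Hg y). pose proof (exp_pos (a y)).
  pose proof (Cmod_ge_0 (cexp (z * RtoC (s y)) - 1)%C). pose proof (Cmod_ge_0 (g y)).
  assert (exp (a y) * Cmod (cexp (z * RtoC (s y)) - 1)%C
          <= exp (a y) * (Cmod z * exp (Rabs (Re z) * NS) * NS)) by (apply Rmult_le_compat_l; lra).
  assert (exp (a y) * Cmod (cexp (z * RtoC (s y)) - 1)%C * Cmod (g y)
          <= exp (a y) * Cmod (cexp (z * RtoC (s y)) - 1)%C * 1) by (apply Rmult_le_compat_l; nra).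
  lra.
Qed.

Lemma Cmod_perturbation_term_sub_le (Gm Qa Qs r : R) (y y' : Y) :
  Rabs (a y - a y') <= Qa * r -> Rabs (s y - s y') <= Qs * r -> Cmod (g y - g y')%C <= Gm * r ->
  Cmod (perturbation_term y - perturbation_term y')%C
  <= Cmod z * exp (Rabs (Re z) * NS) * r *
     ((Gm * NS + Qa * NS) * exp (a y) + (Qa * NS + Qs) * exp (a y')).
Proof.
  intros Ha Hs' Hg'.
  set (c := Cmod z * exp (Rabs (Re z) * NS)).
  set (E := fun y => RtoC (exp (a y))).
  set (B := fun y => (cexp (z * RtoC (s y)) - 1)%C).
  replace (perturbation_term y - perturbation_term y')%C with
    (E y * B y * (g y - g y') + (E y - E y') * B y * g y' + E y' * (B y - B y') * g y')%C
    by (unfold perturbation_term, E, B; ring).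
  eapply Rle_trans; [apply Cmod_triangle|].
  eapply Rle_trans; [apply Rplus_le_compat_r, Cmod_triangle|].
  unfold E, B. rewrite !Cmod_mult, <- RtoC_minus, !Cmod_R, !(Rabs_right (exp _)) by (left; apply exp_pos).
  replace (cexp (z * RtoC (s y)) - 1 - (cexp (z * RtoC (s y')) - 1))%C
    with (cexp (z * RtoC (s y)) - cexp (z * RtoC (s y')))%C by ring.
  pose proof (Cmod_cexp_mul_sub1_le y) as HB. fold c in HB.
  pose proof (Cmod_cexp_mul_sub_le y y') as HdB. fold c in HdB.
  pose proof (Rabs_exp_sub_le (a y) (a y')) as HdE.
  pose proof (Hg y'). pose proof (exp_pos (a y)). pose proof (exp_pos (a y')).
  pose proof (Cmod_ge_0 (cexp (z * RtoC (s y)) - 1)%C). pose proof (Cmod_ge_0 (g y')).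
  pose proof (Cmod_ge_0 (g y - g y')%C). pose proof (Rabs_pos (exp (a y) - exp (a y'))).
  assert (Hc : 0 <= c) by (apply Rmult_le_pos; [apply Cmod_ge_0 | left; apply exp_pos]).
  assert (T1 : exp (a y) * Cmod (cexp (z * RtoC (s y)) - 1)%C * Cmod (g y - g y')%C
               <= exp (a y) * (c * NS) * (Gm * r))
    by (apply Rmult_le_compat; [nra | lra | nra | lra]).
  assert (T2 : Rabs (exp (a y) - exp (a y')) * Cmod (cexp (z * RtoC (s y)) - 1)%C * Cmod (g y')
               <= Qa * r * (exp (a y) + exp (a y')) * (c * NS) * 1).
  { apply Rmult_le_compat; [nra | lra | | lra].
    apply Rmult_le_compat; [lra | lra | | lra]. nra. }
  assert (T3 : exp (a y') * Cmod (cexp (z * RtoC (s y)) - cexp (z * RtoC (s y')))%C * Cmod (g y')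
               <= exp (a y') * (c * (Qs * r)) * 1).
  { apply Rmult_le_compat; [| lra | | lra].
    - apply Rmult_le_pos; [lra | apply Cmod_ge_0].
    - apply Rmult_le_compat_l; [lra|]. eapply Rle_trans; [exact HdB|]. nra. }
  nra.
Qed.

Lemma Cmod_csum_perturbation_le (l : list Y) :
  Cmod (csum (map perturbation_term l))
  <= Cmod z * exp (Rabs (Re z) * NS) * NS * rsum (map (fun y => exp (a y)) l).
Proof.
  eapply Rle_trans; [apply Cmod_csum_le|]. rewrite map_map, <- rsum_scale.
  apply rsum_le. intros y _. apply Cmod_perturbation_term_le.
Qed.

Lemma Cmod_csum_perturbation_sub_le (Gm Qa Qs r : R) (ps : list (Y * Y)) :
  0 <= NS -> 0 <= Gm -> 0 <= Qa -> 0 <= Qs -> 0 <= r ->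
  List.Forall (fun p => Rabs (a (fst p) - a (snd p)) <= Qa * r /\
                        Rabs (s (fst p) - s (snd p)) <= Qs * r /\
                        Cmod (g (fst p) - g (snd p))%C <= Gm * r) ps ->
  Cmod (csum (map perturbation_term (map fst ps)) - csum (map perturbation_term (map snd ps)))%C
  <= Cmod z * exp (Rabs (Re z) * NS) * (Gm * NS + 2 * Qa * NS + Qs)
     * Rmax (rsum (map (fun y => exp (a y)) (map fst ps))) (rsum (map (fun y => exp (a y)) (map snd ps)))
     * r.
Proof.
  intros HNS HGm HQa HQs Hr Hps. rewrite Forall_forall in Hps.
  set (c := Cmod z * exp (Rabs (Re z) * NS)).
  assert (Hc : 0 <= c) by (apply Rmult_le_pos; [apply Cmod_ge_0 | left; apply exp_pos]).
  set (K1 := c * r * (Gm * NS + Qa * NS)). set (K2 := c * r * (Qa * NS + Qs)).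
  rewrite !map_map, csum_map_sub.
  eapply Rle_trans; [apply Cmod_csum_le|]. rewrite map_map.
  eapply Rle_trans;
    [apply (rsum_le _ (fun p => K1 * exp (a (fst p)) + K2 * exp (a (snd p))))|].
  { intros p Hp. destruct (Hps p Hp) as (H1 & H2 & H3).
    eapply Rle_trans; [apply (Cmod_perturbation_term_sub_le Gm Qa Qs r); assumption|].
    right. unfold K1, K2, c. ring. }
  rewrite rsum_lin.
  set (L1 := rsum (map (fun p => exp (a (fst p))) ps)).
  set (L2 := rsum (map (fun p => exp (a (snd p))) ps)).
  assert (HK1 : 0 <= K1) by (unfold K1; apply Rmult_le_pos; nra).
  assert (HK2 : 0 <= K2) by (unfold K2; apply Rmult_le_pos; nra).
  pose proof (Rmult_le_compat_l _ _ _ HK1 (Rmax_l L1 L2)).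
  pose proof (Rmult_le_compat_l _ _ _ HK2 (Rmax_r L1 L2)).
  replace (c * (Gm * NS + 2 * Qa * NS + Qs) * Rmax L1 L2 * r)
    with (K1 * Rmax L1 L2 + K2 * Rmax L1 L2) by (unfold K1, K2; ring).
  lra.
Qed.

End PerturbationTerms.

(** * Iterated preimages and transfer operators *)

Lemma Gamma_pos (gamma : nat -> R) (j n : nat) :
  (forall j, 1 <= gamma j) -> 0 < Gamma gamma j n.
Proof.
  intros Hg. induction n as [|n IH]; simpl; [lra|].
  apply Rmult_lt_0_compat; [exact IH|]. apply Rinv_0_lt_compat. specialize (Hg (j + n)%nat). lra.
Qed.

Section Dynamics.

Variables (X : nat -> Type) (rho : forall j, X j -> X j -> R)
  (T : forall j, X j -> X (S j)) (pre : forall j, X (S j) -> list (X j))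
  (gamma xi : nat -> R) (phi f : forall j, X j -> R) (alpha : R).

Hypothesis Hpre : forall j (x : X (S j)) (y : X j), In y (pre j x) <-> T j y = x.

Fixpoint Pre (j n : nat) {struct n} : X (n + j)%nat -> list (X j) :=
  match n as n0 return X (n0 + j)%nat -> list (X j) with
  | O => fun x => x :: nil
  | S m => fun x => flat_map (Pre j m) (pre (m + j)%nat x)
  end.

Lemma Titer_of_In_Pre (j n : nat) (x : X (n + j)%nat) (y : X j) :
  In y (Pre j n x) -> Titer X T j n y = x.
Proof.
  revert x. induction n as [|n IH]; simpl; intros x H.
  - now destruct H as [-> | []].
  - apply in_flat_map in H as [w [Hw Hy]].
    rewrite (IH w Hy). now apply Hpre.
Qed.

Lemma Lit_eq_csum (z : C) (j n : nat) (g : X j -> C) (x : X (n + j)%nat) :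
  Lit X pre phi f z j n g x =
  csum (map (fun y => cexp (RtoC (Ssum X T phi j n y) + z * RtoC (Ssum X T f j n y))%C * g y)%C
            (Pre j n x)).
Proof.
  revert x. induction n as [|n IH]; intros x.
  - simpl. replace (RtoC 0 + z * RtoC 0)%C with (RtoC 0) by ring.
    rewrite cexp_RtoC, exp_0. unfold csum; simpl. ring.
  - cbn [Lit Pre]. unfold Lop. change (fold_right Cplus (RtoC 0)) with csum.
    rewrite csum_flat_map. f_equal. apply map_ext_in. intros w Hw.
    rewrite IH, csum_scale. f_equal. apply map_ext_in. intros y Hy.
    cbn [Ssum]. rewrite (Titer_of_In_Pre j n w y Hy).
    rewrite Cmult_assoc, <- cexp_plus, !RtoC_plus. f_equal. f_equal. ring.
Qed.

Definition orbits_close (j n : nat) (r : R) (y y' : X j) : Prop :=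
  forall k, (k < n)%nat ->
    rho (k + j)%nat (Titer X T j k y) (Titer X T j k y') <= Gamma gamma (j + k) (n - k) * r /\
    rho (k + j)%nat (Titer X T j k y) (Titer X T j k y') <= xi (k + j)%nat.

Hypothesis Hgamma : forall j, 1 <= gamma j.

Lemma orbits_close_S (j m : nat) (r : R) (y y' : X j) :
  let w := Titer X T j m y in let w' := Titer X T j m y' in
  rho (m + j)%nat w w' <= / gamma (m + j)%nat * r -> rho (m + j)%nat w w' <= xi (m + j)%nat ->
  orbits_close j m (rho (m + j)%nat w w') y y' -> orbits_close j (S m) r y y'.
Proof.
  intros w w' Hr Hxi Hclose k Hk. unfold w, w' in *.
  destruct (Nat.eq_dec k m) as [-> | Hkm].
  - split; [|exact Hxi].
    replace (S m - m)%nat with 1%nat by lia. simpl.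
    replace (j + m + 0)%nat with (m + j)%nat by lia. lra.
  - destruct (Hclose k ltac:(lia)) as [H1 H2]. split; [|exact H2].
    replace (S m - k)%nat with (S (m - k)) by lia. simpl.
    replace (j + k + (m - k))%nat with (m + j)%nat by lia.
    pose proof (Gamma_pos gamma (j + k) (m - k) Hgamma).
    eapply Rle_trans; [exact H1|]. rewrite Rmult_assoc. apply Rmult_le_compat_l; lra.
Qed.

Hypothesis Hpair : forall j (x x' : X (S j)), rho (S j) x x' <= xi (S j) ->
  exists ys ys' : list (X j),
    Permutation ys (pre j x) /\ Permutation ys' (pre j x') /\
    length ys = length ys' /\
    forall k y y', nth_error ys k = Some y -> nth_error ys' k = Some y' ->
      rho j y y' <= Rmin (/ gamma j * rho (S j) x x') (xi j).

Lemma Pre_pairing (j n : nat) (x x' : X (n + j)%nat) :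
  rho (n + j)%nat x x' <= xi (n + j)%nat ->
  exists ps : list (X j * X j),
    Permutation (map fst ps) (Pre j n x) /\ Permutation (map snd ps) (Pre j n x') /\
    List.Forall (fun p => orbits_close j n (rho (n + j)%nat x x') (fst p) (snd p)) ps.
Proof.
  revert x x'. induction n as [|m IH]; intros x x' Hxx.
  - exists ((x, x') :: nil). repeat split; simpl; auto.
    constructor; [intros k Hk; lia | constructor].
  - destruct (Hpair (m + j)%nat x x' Hxx) as (ys & ys' & Hy & Hy' & Hlen & Hnth).
    destruct (zip_of_nth_error _ ys ys' Hlen Hnth) as (wps & Hfst & Hsnd & Hwps).
    rewrite Forall_forall in Hwps.
    set (Inv := fun (w : X (m + j)%nat * X (m + j)%nat) (ps : list (X j * X j)) =>
      Permutation (map fst ps) (Pre j m (fst w)) /\ Permutation (map snd ps) (Pre j m (snd w)) /\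
      List.Forall (fun p => orbits_close j (S m) (rho (S m + j)%nat x x') (fst p) (snd p)) ps).
    destruct (Forall2_choice Inv wps) as [bss Hbss].
    { intros w Hw. pose proof (Rle_trans _ _ _ (Hwps w Hw) (Rmin_l _ _)) as Hw1.
      pose proof (Rle_trans _ _ _ (Hwps w Hw) (Rmin_r _ _)) as Hw2.
      destruct (IH (fst w) (snd w) Hw2) as (ps & Hp1 & Hp2 & Hp3).
      exists ps. repeat split; auto.
      rewrite Forall_forall in Hp3 |- *. intros p Hp.
      assert (E1 : Titer X T j m (fst p) = fst w)
        by (apply Titer_of_In_Pre, (Permutation_in _ Hp1), in_map, Hp).
      assert (E2 : Titer X T j m (snd p) = snd w)
        by (apply Titer_of_In_Pre, (Permutation_in _ Hp2), in_map, Hp).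
      specialize (Hp3 p Hp). rewrite <- E1, <- E2 in Hw1, Hw2, Hp3.
      now apply orbits_close_S. }
    exists (concat bss). cbn [Pre]. repeat split.
    + eapply Permutation_trans.
      * apply (concat_perm fst (fun w => Pre j m (fst w)) wps).
        eapply Forall2_impl; [|exact Hbss]. now intros ? ? [].
      * rewrite flat_map_map, Hfst. now apply Permutation_flat_map.
    + eapply Permutation_trans.
      * apply (concat_perm snd (fun w => Pre j m (snd w)) wps).
        eapply Forall2_impl; [|exact Hbss]. now intros ? ? (_ & ? & _).
      * rewrite flat_map_map, Hsnd. now apply Permutation_flat_map.
    + apply Forall_concat. apply (Forall2_Forall_r Inv _ wps); [|exact Hbss]. now intros ? ? (_ & _ & ?).
Qed.

Lemma Ssum_sub_le (h : forall j, X j -> R) (hv : nat -> R)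
  (Hhv : forall m (u u' : X m) s, 0 < s -> rho m u u' <= s -> rho m u u' <= xi m ->
           Rabs (h m u - h m u') <= hv m * Rpower s alpha)
  (j n : nat) (r : R) (y y' : X j) :
  0 < r -> orbits_close j n r y y' ->
  Rabs (Ssum X T h j n y - Ssum X T h j n y') <=
  rsum (map (fun k => hv (j + k)%nat * Rpower (Gamma gamma (j + k) (n - k)) alpha) (seq 0 n))
  * Rpower r alpha.
Proof.
  intros Hr Hclose.
  assert (Hm : forall m, (m <= n)%nat ->
    Rabs (Ssum X T h j m y - Ssum X T h j m y') <=
    rsum (map (fun k => hv (j + k)%nat * Rpower (Gamma gamma (j + k) (n - k)) alpha) (seq 0 m))
    * Rpower r alpha).
  { induction m as [|m IH]; intros Hmn.
    - simpl. unfold rsum; simpl. rewrite Rminus_diag, Rabs_R0. lra.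
    - rewrite rsum_seq_S. cbn [Ssum].
      destruct (Hclose m ltac:(lia)) as [H1 H2].
      pose proof (Gamma_pos gamma (j + m) (n - m) Hgamma).
      assert (Hterm := Hhv (m + j)%nat _ _ (Gamma gamma (j + m) (n - m) * r) ltac:(nra) H1 H2).
      rewrite <- Rpower_mult_distr in Hterm by lra.
      replace (hv (j + m)%nat) with (hv (m + j)%nat) by (f_equal; lia).
      eapply Rle_trans; [apply Rabs_plus_sub_le|].
      rewrite Rmult_plus_distr_r, Rmult_assoc.
      apply Rplus_le_compat; [apply IH; lia | exact Hterm]. }
  now apply Hm.
Qed.

Lemma Ssum_abs_le (h : forall j, X j -> R) (sh : nat -> R)
  (Hsh : forall m (u : X m), Rabs (h m u) <= sh m) (j n : nat) (y : X j) :
  Rabs (Ssum X T h j n y) <= rsum (map (fun k => sh (k + j)%nat) (seq 0 n)).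
Proof.
  induction n as [|n IH].
  - simpl. unfold rsum; simpl. rewrite Rabs_R0; lra.
  - rewrite rsum_seq_S. cbn [Ssum]. eapply Rle_trans; [apply Rabs_triang|].
    specialize (Hsh (n + j)%nat (Titer X T j n y)). lra.
Qed.

Hypothesis Hrho : forall j, metric_diam1 (rho j).
Hypothesis Hxi : forall j, 0 < xi j <= 1.
Hypothesis Halpha : 0 < alpha <= 1.

Definition hvar (h : forall j, X j -> R) (m : nat) : R :=
  real (holder_var (rho m) alpha (xi m) (fun x => RtoC (h m x))).

Definition Qreal (h : forall j, X j -> R) (j n : nat) : R :=
  rsum (map (fun k => hvar h (j + k)%nat * Rpower (Gamma gamma (j + k) (n - k)) alpha) (seq 0 n)).

Section HolderPotential.

Variable h : forall j, X j -> R.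
Hypothesis Hh : forall j, is_finite (holder_norm (rho j) alpha 1 (fun x => RtoC (h j x))).

Lemma holder_var_xi_finite (m : nat) :
  is_finite (holder_var (rho m) alpha (xi m) (fun x => RtoC (h m x))).
Proof. apply holder_var_finite; [apply Hxi | apply Hh]. Qed.

Lemma hvar_ge0 (m : nat) : 0 <= hvar h m.
Proof.
  pose proof (holder_var_ge0 _ (rho m) alpha (xi m) (fun x => RtoC (h m x))) as H.
  rewrite <- holder_var_xi_finite in H. exact H.
Qed.

Lemma Rabs_sub_le_hvar (m : nat) (u u' : X m) (s : R) :
  0 < s -> rho m u u' <= s -> rho m u u' <= xi m ->
  Rabs (h m u - h m u') <= hvar h m * Rpower s alpha.
Proof.
  intros Hs H1 H2. rewrite <- Cmod_R, RtoC_minus.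
  apply (Cmod_sub_le_holder_var _ (rho m) alpha (Hrho m) ltac:(lra) (xi m) s
           (fun x => RtoC (h m x))); auto.
  apply holder_var_xi_finite.
Qed.

Lemma Qsum_eq_Qreal (j n : nat) : Qsum X rho gamma xi alpha h j n = Finite (Qreal h j n).
Proof.
  unfold Qsum, Qreal. induction (seq 0 n) as [|k ks IH]; simpl; [reflexivity|].
  rewrite IH, <- (holder_var_xi_finite (j + k)). reflexivity.
Qed.

Lemma Qreal_ge0 (j n : nat) : 0 <= Qreal h j n.
Proof.
  apply rsum_ge0. intros k _.
  apply Rmult_le_pos; [apply hvar_ge0 | left; apply Rpower_gt0].
Qed.

Lemma Ssum_sub_le_Qreal (j n : nat) (r : R) (y y' : X j) :
  0 < r -> orbits_close j n r y y' ->
  Rabs (Ssum X T h j n y - Ssum X T h j n y') <= Qreal h j n * Rpower r alpha.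
Proof. apply Ssum_sub_le, Rabs_sub_le_hvar. Qed.

Lemma Ssum_supnorm_finite (j n : nat) : is_finite (supnorm (fun x => RtoC (Ssum X T h j n x))).
Proof.
  set (sh := fun m => real (supnorm (fun x => RtoC (h m x)))).
  assert (Hsh : forall m (u : X m), Rabs (h m u) <= sh m).
  { intros m u. rewrite <- Cmod_R. apply (Cmod_le_supnorm _ (fun x => RtoC (h m x)) u).
    exact (proj1 (holder_norm_finite _ (rho m) alpha 1 _ (Hh m))). }
  assert (Hsh0 : forall m, 0 <= sh m).
  { intros m. pose proof (supnorm_ge0 _ (fun x => RtoC (h m x))) as H.
    rewrite <- (proj1 (holder_norm_finite _ (rho m) alpha 1 _ (Hh m))) in H. exact H. }
  apply (Rbar_bounded_finite _ (rsum (map (fun k => sh (k + j)%nat) (seq 0 n)))); [apply supnorm_ge0|].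
  apply Rbar_sup_le.
  - apply rsum_ge0. intros k _. apply Hsh0.
  - intros t [x ->]. simpl. rewrite Cmod_R. now apply Ssum_abs_le.
Qed.

End HolderPotential.

Arguments perturbation_term {Y}.

Lemma Lit_sub_Lit0 (z : C) (j n : nat) (g : X j -> C) (x : X (n + j)%nat) :
  (Lit X pre phi f z j n g x - Lit X pre phi f (RtoC 0) j n g x)%C
  = csum (map (perturbation_term (Ssum X T phi j n) (Ssum X T f j n) g z) (Pre j n x)).
Proof.
  rewrite !Lit_eq_csum, csum_map_sub. f_equal. apply map_ext. intros y.
  unfold perturbation_term. rewrite cexp_plus.
  replace (RtoC (Ssum X T phi j n y) + RtoC 0 * RtoC (Ssum X T f j n y))%C
    with (RtoC (Ssum X T phi j n y)) by ring.
  rewrite cexp_RtoC. ring.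
Qed.

Lemma Lit0_one (j n : nat) (x : X (n + j)%nat) :
  Lit X pre phi f (RtoC 0) j n (fun _ => RtoC 1) x
  = RtoC (rsum (map (fun y => exp (Ssum X T phi j n y)) (Pre j n x))).
Proof.
  rewrite Lit_eq_csum, <- csum_RtoC. f_equal. apply map_ext. intros y.
  replace (RtoC (Ssum X T phi j n y) + RtoC 0 * RtoC (Ssum X T f j n y))%C
    with (RtoC (Ssum X T phi j n y)) by ring.
  rewrite cexp_RtoC. ring.
Qed.

Hypothesis Hphi : forall j, is_finite (holder_norm (rho j) alpha 1 (fun x => RtoC (phi j x))).
Hypothesis Hf : forall j, is_finite (holder_norm (rho j) alpha 1 (fun x => RtoC (f j x))).

Lemma Pre_pairing_holder (j n : nat) (g : X j -> C) (x x' : X (n + j)%nat) :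
  (1 <= n)%nat -> Rbar_le (holder_norm (rho j) alpha (xi j) g) (Finite 1) ->
  0 < rho (n + j)%nat x x' -> rho (n + j)%nat x x' <= xi (n + j)%nat ->
  exists ps : list (X j * X j),
    Permutation (map fst ps) (Pre j n x) /\ Permutation (map snd ps) (Pre j n x') /\
    List.Forall (fun p =>
      Rabs (Ssum X T phi j n (fst p) - Ssum X T phi j n (snd p))
        <= Qreal phi j n * Rpower (rho (n + j)%nat x x') alpha /\
      Rabs (Ssum X T f j n (fst p) - Ssum X T f j n (snd p))
        <= Qreal f j n * Rpower (rho (n + j)%nat x x') alpha /\
      Cmod (g (fst p) - g (snd p))%C
        <= Rpower (Gamma gamma j n) alpha * Rpower (rho (n + j)%nat x x') alpha) ps.
Proof.
  intros Hn Hg Hpos Hxx.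
  destruct (Pre_pairing j n x x' Hxx) as (ps & Hp1 & Hp2 & Hclose).
  exists ps. repeat split; [exact Hp1 | exact Hp2|].
  rewrite Forall_forall in Hclose |- *. intros p Hp. specialize (Hclose p Hp).
  repeat split; [now apply Ssum_sub_le_Qreal .. |].
  (* the orbits are already close at time 0, in the metric of [X j] *)
  destruct (Hclose 0%nat ltac:(lia)) as [H1 H2]. simpl in H1, H2.
  rewrite Nat.add_0_r, Nat.sub_0_r in H1.
  pose proof (Gamma_pos gamma j n Hgamma).
  rewrite Rpower_mult_distr by lra.
  apply (proj2 (holder_unit_ball _ (rho j) alpha (Hrho j) ltac:(lra) (xi j) g Hg)); auto; nra.
Qed.

Definition Rbound (j n : nat) (z : C) : Rbar :=
  let NSf := supnorm (fun x => RtoC (Ssum X T f j n x)) in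
  Rbar_mult (Finite (Cmod z * exp (Rabs (Re z) * real NSf)))
    (Rbar_mult (supnorm (Lit X pre phi f (RtoC 0) j n (fun _ => RtoC 1)))
      (Rbar_plus
        (Rbar_mult
          (Rbar_plus (Finite (1 + Rpower (Gamma gamma j n) alpha))
                     (Rbar_mult (Finite 2) (Qsum X rho gamma xi alpha phi j n)))
          NSf)
        (Qsum X rho gamma xi alpha f j n))).

Lemma Rbound_eq (j n : nat) (z : C) :
  let NS := real (supnorm (fun x => RtoC (Ssum X T f j n x))) in
  Rbound j n z =
  Rbar_mult (Finite (Cmod z * exp (Rabs (Re z) * NS)))
    (Rbar_mult (supnorm (Lit X pre phi f (RtoC 0) j n (fun _ => RtoC 1)))
      (Finite (NS + (Rpower (Gamma gamma j n) alpha * NS + 2 * Qreal phi j n * NS + Qreal f j n)))).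
Proof.
  intros NS. unfold Rbound, NS. rewrite <- (Ssum_supnorm_finite f Hf j n).
  rewrite !Qsum_eq_Qreal by assumption. simpl. do 3 f_equal. ring.
Qed.

Lemma Lit_sub_holder_le (j n : nat) (z : C) (g : X j -> C) :
  (1 <= n)%nat -> Rbar_le (holder_norm (rho j) alpha (xi j) g) (Finite 1) ->
  Rbar_le (holder_norm (rho (n + j)%nat) alpha (xi (n + j)%nat)
             (fun x => Lit X pre phi f z j n g x - Lit X pre phi f (RtoC 0) j n g x)%C)
          (Rbound j n z).
Proof.
  intros Hn Hg.
  destruct (holder_unit_ball _ (rho j) alpha (Hrho j) ltac:(lra) (xi j) g Hg) as [Hg_sup _].
  pose proof (Ssum_supnorm_finite f Hf j n) as HNSf.
  set (NS := real (supnorm (fun x => RtoC (Ssum X T f j n x)))).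
  assert (HNS : forall y, Rabs (Ssum X T f j n y) <= NS).
  { intros y. rewrite <- Cmod_R. exact (Cmod_le_supnorm _ (fun x => RtoC (Ssum X T f j n x)) y HNSf). }
  assert (HNS0 : 0 <= NS).
  { pose proof (supnorm_ge0 _ (fun x => RtoC (Ssum X T f j n x))) as H.
    rewrite <- HNSf in H. exact H. }
  pose proof (Qreal_ge0 phi Hphi j n). pose proof (Qreal_ge0 f Hf j n).
  pose proof (Rpower_gt0 (Gamma gamma j n) alpha).
  set (L := fun x => rsum (map (fun y => exp (Ssum X T phi j n y)) (Pre j n x))).
  rewrite Rbound_eq. fold NS.
  apply (holder_norm_le_scaled_sup _ _ alpha _ _ _ _ L).
  - apply Rmult_le_pos; [apply Cmod_ge_0 | left; apply exp_pos].
  - exact HNS0.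
  - nra.
  - apply supnorm_ge0.
  - intros x. apply Rbar_sup_ub. exists x. rewrite Lit0_one, Cmod_R, Rabs_right; [reflexivity|].
    apply Rle_ge, rsum_ge0. intros y _. left; apply exp_pos.
  - intros x. rewrite Lit_sub_Lit0. now apply Cmod_csum_perturbation_le.
  - intros x x' Hpos Hxx.
    destruct (Pre_pairing_holder j n g x x' Hn Hg Hpos Hxx) as (ps & Hp1 & Hp2 & Hps).
    rewrite !Lit_sub_Lit0.
    rewrite (csum_perm _ _ (Permutation_map _ (Permutation_sym Hp1))),
            (csum_perm _ _ (Permutation_map _ (Permutation_sym Hp2))).
    unfold L. rewrite <- (rsum_perm _ _ (Permutation_map _ Hp1)), <- (rsum_perm _ _ (Permutation_map _ Hp2)).
    apply Cmod_csum_perturbation_sub_le; auto; try lra.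
    left; apply Rpower_gt0.
Qed.

Lemma Lit_sub_opnorm_le (j n : nat) (z : C) :
  (1 <= n)%nat ->
  Rbar_le (opnorm (rho j) (rho (n + j)%nat) alpha
             (fun g x => Lit X pre phi f z j n g x - Lit X pre phi f (RtoC 0) j n g x)%C)
          (Rbar_mult (Finite (3 / xi (n + j)%nat)) (Rbound j n z)).
Proof.
  intros Hn.
  assert (H3 : 0 < 3 / xi (n + j)%nat) by (apply Rdiv_lt_0_compat; [lra | apply Hxi]).
  apply Rbar_sup_le.
  - (* [Rbound] dominates the (nonnegative) norm of the image of [g = 0] *)
    apply Rbar_mult_ge0_pos_l; [exact H3|].
    eapply Rbar_le_trans; [apply holder_norm_ge0 | apply (Lit_sub_holder_le j n z (fun _ => RtoC 0) Hn)].
    eapply Rbar_le_trans; [apply (holder_norm_le_of_bounds _ _ _ _ 0 0) | simpl; lra]; try lra.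
    + intros x. rewrite Cmod_0. lra.
    + intros x x' _ _. replace (RtoC 0 - RtoC 0)%C with (RtoC 0) by ring. rewrite Cmod_0. lra.
  - intros t (g & Hg & ->).
    eapply Rbar_le_trans; [apply holder_norm_le_scale; try apply Hrho; try apply Hxi; lra|].
    apply Rbar_mult_le_compat_pos_l; [exact H3 | apply holder_norm_ge0 |].
    apply Lit_sub_holder_le; [exact Hn|].
    eapply Rbar_le_trans; [apply holder_norm_mono, Hxi | exact Hg].
Qed.

End Dynamics.

Theorem lemma7p3
  (X : nat -> Type) (rho : forall j, X j -> X j -> R)
  (T : forall j, X j -> X (S j)) (pre : forall j, X (S j) -> list (X j))
  (gamma xi : nat -> R) (phi f : forall j, X j -> R) (alpha : R)
  (Hrho : forall j, metric_diam1 (rho j))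
  (Hpre : forall j (x : X (S j)) (y : X j), In y (pre j x) <-> T j y = x)
  (Hnodup : forall j (x : X (S j)), NoDup (pre j x))
  (Hgamma : forall j, 1 <= gamma j)
  (Hxi : forall j, 0 < xi j <= 1)
  (Hpair : forall j (x x' : X (S j)), rho (S j) x x' <= xi (S j) ->
     exists ys ys' : list (X j),
       Permutation ys (pre j x) /\ Permutation ys' (pre j x') /\
       length ys = length ys' /\
       forall k y y', nth_error ys k = Some y -> nth_error ys' k = Some y' ->
         rho j y y' <= Rmin (/ gamma j * rho (S j) x x') (xi j))
  (Hphi : forall j, is_finite (holder_norm (rho j) alpha 1 (fun x => RtoC (phi j x))))
  (Hf : forall j, is_finite (holder_norm (rho j) alpha 1 (fun x => RtoC (f j x))))
  (Halpha : 0 < alpha <= 1) :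
  let Rjn := fun (j n : nat) (z : C) =>
    let NSf := supnorm (fun x => RtoC (Ssum X T f j n x)) in
    Rbar_mult (Finite (Cmod z * exp (Rabs (Re z) * real NSf)))
      (Rbar_mult (supnorm (Lit X pre phi f (RtoC 0) j n (fun _ => RtoC 1)))
        (Rbar_plus
          (Rbar_mult
            (Rbar_plus (Finite (1 + Rpower (Gamma gamma j n) alpha))
                       (Rbar_mult (Finite 2) (Qsum X rho gamma xi alpha phi j n)))
            NSf)
          (Qsum X rho gamma xi alpha f j n))) in
  (forall (j n : nat) (z : C) (g : X j -> C), (1 <= n)%nat ->
     Rbar_le (holder_norm (rho j) alpha (xi j) g) (Finite 1) ->
     Rbar_le (holder_norm (rho (n + j)%nat) alpha (xi (n + j)%nat)
                (fun x => Cminus (Lit X pre phi f z j n g x) (Lit X pre phi f (RtoC 0) j n g x)))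
             (Rjn j n z)) /\
  (forall (j n : nat) (z : C), (1 <= n)%nat ->
     Rbar_le (opnorm (rho j) (rho (n + j)%nat) alpha
                (fun g x => Cminus (Lit X pre phi f z j n g x) (Lit X pre phi f (RtoC 0) j n g x)))
             (Rbar_mult (Finite (3 / xi (n + j)%nat)) (Rjn j n z))).
Proof.
  intros Rjn. split.
  - intros j n z g Hn Hg. now apply Lit_sub_holder_le.
  - intros j n z Hn. now apply Lit_sub_opnorm_le.
Qed.
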